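(* Let $\mathfrak{g}$ be an SVN with sufficient storage under the Multi-Objective Framework, with parameters $\beta,\lambda,c\in(0,1)$. Then $\mathfrak{g}$ is bilaterally stable if and only if both of the following hold. 1. For every link $\langle ij\rangle\in\mathfrak{g}$: $\beta[\lambda^{\eta_i(\mathfrak{g})-1}-\lambda^{\eta_i(\mathfrak{g})}]<c$ implies $\beta[\lambda^{\eta_j(\mathfrak{g})-1}-\lambda^{\eta_j(\mathfrak{g})}]>c$. 2. For every pair of distinct agents $i,j$ with $\langle ij\rangle\notin\mathfrak{g}$: $\beta[\lambda^{\eta_i(\mathfrak{g})}-\lambda^{\eta_i(\mathfrak{g})+1}]>c$ implies $\beta[\lambda^{\eta_j(\mathfrak{g})}-\lambda^{\eta_j(\mathfrak{g})+1}]<c$.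
   Context: A social storage network $\mathfrak{g}$ on a finite set $\mathbf{A}$ of agents is a simple undirected graph; $\eta_i(\mathfrak{g})$ is the number of neighbours of $i$. For non-adjacent $i,j$, $\mathfrak{g}+\langle ij\rangle$ denotes the network with the link $\langle ij\rangle$ added; for adjacent $i,j$, $\mathfrak{g}-\langle ij\rangle$ denotes the network with it removed. The network is an SVN under the Multi-Objective Framework when: - all agents have the same data worth $\beta$; - $\lambda$ is the disk failure rate and $c$ is the cost per link; - storage is sufficient: $s_i\ge\sum_{j\ne i}d_j$ for all $i$, where $s_i$ is agent $i$'s offered storage and $d_j$ is agent $j$'s data size; - utility is $u_i(\mathfrak{g})=\beta(1-\lambda^{\eta_i(\mathfrak{g})})-c\,\eta_i(\mathfrak{g})$. $\mathfrak{g}$ is bilaterally stable if both of the following hold. 1. For every link $\langle ij\rangle\in\mathfrak{g}$: if $u_i(\mathfrak{g}-\langle ij\rangle)>u_i(\mathfrak{g})$, then $u_j(\mathfrak{g}-\langle ij\rangle)<u_j(\mathfrak{g})$. 2. For every non-link $\langle ij\rangle\notin\mathfrak{g}$: if $u_i(\mathfrak{g}+\langle ij\rangle)>u_i(\mathfrak{g})$, then $u_j(\mathfrak{g}+\langle ij\rangle)<u_j(\mathfrak{g})$. In other words, both adding and deleting a link require mutual consent. *)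

From mathcomp Require Import all_boot all_order all_algebra.
Set Implicit Arguments. Unset Strict Implicit. Unset Printing Implicit Defensive.
Import Order.TTheory GRing.Theory Num.Theory.
Local Open Scope ring_scope.

Definition simple_graph (T : finType) (g : rel T) : Prop :=
  (forall i, g i i = false) /\ (forall i j, g i j = g j i).

Definition eta (T : finType) (g : rel T) (i : T) : nat := #|[set j | g i j]|.

Definition add_link (T : finType) (g : rel T) (i j : T) : rel T :=
  fun x y => g x y || ((x == i) && (y == j)) || ((x == j) && (y == i)).
Definition del_link (T : finType) (g : rel T) (i j : T) : rel T :=
  fun x y => g x y && ~~ (((x == i) && (y == j)) || ((x == j) && (y == i))).

Definition util (R : realFieldType) (beta lambda c : R)
  (T : finType) (g : rel T) (i : T) : R :=
  beta * (1 - lambda ^+ eta g i) - c * (eta g i)%:R.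

Definition bilaterally_stable (R : realFieldType) (beta lambda c : R)
  (T : finType) (g : rel T) : Prop :=
  (forall i j, g i j ->
     util beta lambda c (del_link g i j) i > util beta lambda c g i ->
     util beta lambda c (del_link g i j) j < util beta lambda c g j) /\
  (forall i j, i != j -> ~~ g i j ->
     util beta lambda c (add_link g i j) i > util beta lambda c g i ->
     util beta lambda c (add_link g i j) j < util beta lambda c g j).

Definition sufficient_storage (R : realFieldType) (T : finType)
  (s d : T -> R) : Prop :=
  forall i, \sum_(j | j != i) d j <= s i.

(* Adding or deleting the link <ij> changes eta_i and eta_j by exactly one, and
   utilities depend only on degrees.  Since
   u(n+1) - u(n) = beta (lambda^n - lambda^(n+1)) - c, an agent strictly gains
   from one more link iff its marginal benefit exceeds c and strictly gains from
   losing one iff the marginal benefit of its last link is below c; substituting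
   these equivalences into the definition of bilateral stability gives the
   theorem. *)
From mathcomp Require Import all_boot all_order all_algebra.
From mathcomp Require Import lra.
Set Implicit Arguments. Unset Strict Implicit.
Import Order.TTheory GRing.Theory Num.Theory.
Local Open Scope ring_scope.

Section LinkDegrees.

Variables (T : finType) (g : rel T).

Lemma del_linkC i j : del_link g i j =2 del_link g j i.
Proof. by move=> x y; rewrite /del_link orbC. Qed.

Lemma add_linkC i j : add_link g i j =2 add_link g j i.
Proof. by move=> x y; rewrite /add_link -orbA [X in _ || X]orbC orbA. Qed.

Lemma eta_gt0 i j : g i j -> (0 < eta g i)%N.
Proof. by move=> gij; apply/card_gt0P; exists j; rewrite inE. Qed.

Lemma eta_del_link i j : simple_graph g -> g i j ->
  eta (del_link g i j) i = (eta g i).-1.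
Proof.
move=> [irr _] gij.
have nij : i != j by apply/eqP=> eij; rewrite eij irr in gij.
rewrite /eta (cardsD1 j [set x | g i x]) inE gij add1n /=.
apply: eq_card => x; rewrite !inE /del_link eqxx /= (negbTE nij) /=.
by rewrite orbF andbC.
Qed.

Lemma eta_del_linkr i j : simple_graph g -> g i j ->
  eta (del_link g i j) j = (eta g j).-1.
Proof.
move=> sg gij; have gji : g j i by rewrite sg.2.
rewrite -(eta_del_link sg gji) /eta.
by apply: eq_card => x; rewrite !inE del_linkC.
Qed.

Lemma eta_add_link i j : i != j -> ~~ g i j ->
  eta (add_link g i j) i = (eta g i).+1.
Proof.
move=> nij ngij.
rewrite /eta (cardsD1 j [set x | add_link g i j i x]) inE /add_link !eqxx /=.
rewrite orbT add1n; congr _.+1; apply: eq_card => x.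
rewrite !inE (negbTE nij) /= orbF andbC.
by case: (x =P j) => [->|]; rewrite ?(negbTE ngij) ?andbF ?orbF ?andbT.
Qed.

Lemma eta_add_linkr i j : simple_graph g -> i != j -> ~~ g i j ->
  eta (add_link g i j) j = (eta g j).+1.
Proof.
move=> sg nij ngij.
have nji : j != i by rewrite eq_sym.
have ngji : ~~ g j i by rewrite sg.2.
rewrite -(eta_add_link nji ngji) /eta.
by apply: eq_card => x; rewrite !inE add_linkC.
Qed.

End LinkDegrees.

Section MarginalUtility.

Variables (R : realFieldType) (beta lambda c : R).

Let payoff (n : nat) : R := beta * (1 - lambda ^+ n) - c * n%:R.

Lemma payoff_succ_gt n :
  (payoff n < payoff n.+1) = (c < beta * (lambda ^+ n - lambda ^+ n.+1)).
Proof. by rewrite /payoff -natr1; apply/idP/idP => ?; lra. Qed.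

Lemma payoff_succ_lt n :
  (payoff n.+1 < payoff n) = (beta * (lambda ^+ n - lambda ^+ n.+1) < c).
Proof. by rewrite /payoff -natr1; apply/idP/idP => ?; lra. Qed.

Lemma payoff_pred_gt n : (0 < n)%N ->
  (payoff n < payoff n.-1) = (beta * (lambda ^+ n.-1 - lambda ^+ n) < c).
Proof. by case: n => // n _; exact: payoff_succ_lt. Qed.

Lemma payoff_pred_lt n : (0 < n)%N ->
  (payoff n.-1 < payoff n) = (c < beta * (lambda ^+ n.-1 - lambda ^+ n)).
Proof. by case: n => // n _; exact: payoff_succ_gt. Qed.

Variables (T : finType) (g : rel T).
Hypothesis sg : simple_graph g.

Lemma del_link_consentP i j : g i j ->
  (util beta lambda c (del_link g i j) i > util beta lambda c g i ->
   util beta lambda c (del_link g i j) j < util beta lambda c g j) <->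
  (beta * (lambda ^+ (eta g i).-1 - lambda ^+ eta g i) < c ->
   beta * (lambda ^+ (eta g j).-1 - lambda ^+ eta g j) > c).
Proof.
move=> gij; have gji : g j i by rewrite sg.2.
rewrite /util (eta_del_link sg gij) (eta_del_linkr sg gij).
by rewrite (payoff_pred_gt (eta_gt0 gij)) (payoff_pred_lt (eta_gt0 gji)).
Qed.

Lemma add_link_consentP i j : i != j -> ~~ g i j ->
  (util beta lambda c (add_link g i j) i > util beta lambda c g i ->
   util beta lambda c (add_link g i j) j < util beta lambda c g j) <->
  (beta * (lambda ^+ eta g i - lambda ^+ (eta g i).+1) > c ->
   beta * (lambda ^+ eta g j - lambda ^+ (eta g j).+1) < c).
Proof.
move=> nij ngij.
rewrite /util (eta_add_link nij ngij) (eta_add_linkr sg nij ngij).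
by rewrite payoff_succ_gt payoff_succ_lt.
Qed.

End MarginalUtility.

Theorem theorem1 (R : realFieldType) (T : finType) (g : rel T)
  (beta lambda c : R) (s d : T -> R) :
  simple_graph g ->
  0 < beta < 1 -> 0 < lambda < 1 -> 0 < c < 1 ->
  sufficient_storage s d ->
  bilaterally_stable beta lambda c g <->
  ((forall i j, g i j ->
      beta * (lambda ^+ (eta g i).-1 - lambda ^+ eta g i) < c ->
      beta * (lambda ^+ (eta g j).-1 - lambda ^+ eta g j) > c) /\
   (forall i j, i != j -> ~~ g i j ->
      beta * (lambda ^+ eta g i - lambda ^+ (eta g i).+1) > c ->
      beta * (lambda ^+ eta g j - lambda ^+ (eta g j).+1) < c)).
Proof.
move=> sg _ _ _ _.
split=> [[Hdel Hadd] | [Hdel Hadd]]; split=> i j.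
- move=> gij; exact/(del_link_consentP beta lambda c sg gij)/Hdel.
- move=> nij ngij; exact/(add_link_consentP beta lambda c sg nij ngij)/Hadd.
- move=> gij; exact/(del_link_consentP beta lambda c sg gij)/Hdel.
- move=> nij ngij; exact/(add_link_consentP beta lambda c sg nij ngij)/Hadd.
Qed.
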